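(* Fix $p\in(0,1)$, $q=1-p$. Let $\nu_n$ be the stationary law of the careless count chain and $\mu_n:=\mathbb P_{\nu_n}(K_0<n,K_1=n)$. Then $\mu_n=\nu_n(n)(1-q^n)$, and equivalently $\mu_n=\nu_n(n-1)\frac{q^n}{n}$.
   Context: The careless count chain $(K_t)$ on $\{0,\dots,n\}$: given $K_t=k$, with probability $k/n$, $K_{t+1}\sim\mathrm{Bin}(k,q)$, and with probability $(n-k)/n$, $K_{t+1}\sim\mathrm{Bin}(k+1,q)$. It is irreducible and aperiodic with unique stationary law $\nu_n$; $\mathbb P_{\nu_n}$ denotes the chain started from $\nu_n$. *)

From HB Require Import structures.
From mathcomp Require Import all_boot all_order all_algebra.
Unset Printing Implicit Defensive.
Import Order.TTheory GRing.Theory Num.Theory.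
Local Open Scope ring_scope.

Definition binom_pmf (R : realFieldType) (m : nat) (q : R) (j : nat) : R :=
  ('C(m, j))%:R * q ^+ j * (1 - q) ^+ (m - j).

Definition careless_P (R : realFieldType) (n : nat) (q : R)
    (k j : 'I_n.+1) : R :=
  (k%:R / n%:R) * binom_pmf R k q j
  + ((n - k)%:R / n%:R) * binom_pmf R k.+1 q j.

Definition stationary_law (R : realFieldType) (n : nat) (q : R)
    (nu : 'I_n.+1 -> R) : Prop :=
  (forall i, 0 <= nu i) /\ (\sum_i nu i = 1) /\
  (forall j, nu j = \sum_i nu i * careless_P R n q i j).

Definition two_step_prob (R : realFieldType) (n : nat) (q : R)
    (nu : 'I_n.+1 -> R) (A B : pred 'I_n.+1) : R :=
  \sum_(i | A i) \sum_(j | B j) nu i * careless_P R n q i j.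

(* Only the states n-1 and n can reach n in one step (the count rises by at
   most one), with probabilities q^n/n and q^n.  Hence mu is the inflow
   nu(n-1) q^n/n into n, and stationarity at n balances this inflow against
   the outflow nu(n) (1 - q^n). *)

From HB Require Import structures.
From mathcomp Require Import all_boot all_order all_algebra.
Import Order.TTheory GRing.Theory Num.Theory.
Local Open Scope ring_scope.

Section CarelessKernel.

Variables (R : realFieldType) (n : nat) (q : R).

Lemma binom_pmf_full (m : nat) : binom_pmf R m q m = q ^+ m.
Proof. by rewrite /binom_pmf binn subnn expr0 mulr1 mul1r. Qed.

Lemma binom_pmf_small (m j : nat) : (m < j)%N -> binom_pmf R m q j = 0.
Proof. by move=> ltmj; rewrite /binom_pmf bin_small // !mul0r. Qed.

Lemma careless_P_eq0 (i j : 'I_n.+1) : (i.+1 < j)%N -> careless_P R n q i j = 0.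
Proof.
move=> ltij; rewrite /careless_P !binom_pmf_small ?mulr0 ?addr0 //.
exact: ltn_trans ltij.
Qed.

Lemma careless_P_up (i j : 'I_n.+1) :
  j = i.+1 :> nat -> careless_P R n q i j = (n - i)%:R / n%:R * q ^+ j.
Proof.
move=> eq_j; rewrite /careless_P eq_j binom_pmf_small ?mulr0 ?add0r //.
by rewrite binom_pmf_full.
Qed.

Lemma careless_P_max_max : (0 < n)%N -> careless_P R n q ord_max ord_max = q ^+ n.
Proof.
move=> n_gt0; rewrite /careless_P /= binom_pmf_full subnn !mul0r addr0.
by rewrite divff ?mul1r // pnatr_eq0 -lt0n.
Qed.

Lemma ltn_ord_max (i : 'I_n.+1) : (i < n)%N = (i != ord_max).
Proof. by rewrite -val_eqE /= ltn_neqAle -ltnS ltn_ord andbT. Qed.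

Lemma val_inord_pred : (inord n.-1 : 'I_n.+1) = n.-1 :> nat.
Proof. by rewrite inordK // ltnS leq_pred. Qed.

Lemma careless_P_pred_max :
  (0 < n)%N -> careless_P R n q (inord n.-1) ord_max = q ^+ n / n%:R.
Proof.
move=> n_gt0; rewrite careless_P_up /= val_inord_pred ?prednK //.
by rewrite -{1}(prednK n_gt0) subSnn div1r mulrC.
Qed.

Lemma inflow_max (nu : 'I_n.+1 -> R) : (0 < n)%N ->
  \sum_(i | i != ord_max) nu i * careless_P R n q i ord_max
    = nu (inord n.-1) * (q ^+ n / n%:R).
Proof.
move=> n_gt0; rewrite (bigD1 (inord n.-1)) /=; last first.
  by rewrite -val_eqE /= val_inord_pred ltn_eqF ?prednK.
rewrite careless_P_pred_max // big1 ?addr0 // => i /andP [ne_max ne_pred].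
rewrite careless_P_eq0 ?mulr0 //=.
have lt_in : (i < n)%N by rewrite ltn_ord_max.
have ne_Sin : i.+1 != n.
  apply: contra ne_pred => /eqP eq_Sin.
  by rewrite -val_eqE /= val_inord_pred -(f_equal predn eq_Sin).
by rewrite ltn_neqAle ne_Sin.
Qed.

Lemma stationary_inflow (nu : 'I_n.+1 -> R) (j : 'I_n.+1) :
  stationary_law R n q nu ->
  \sum_(i | i != j) nu i * careless_P R n q i j = nu j * (1 - careless_P R n q j j).
Proof.
move=> [_ [_ balance]]; have := balance j; rewrite (bigD1 j) //= => balance_j.
apply: (addrI (nu j * careless_P R n q j j)); rewrite -balance_j.
by rewrite mulrBr mulr1 addrC subrK.
Qed.

Lemma two_step_prob_into_max (nu : 'I_n.+1 -> R) :
  two_step_prob R n q nu (fun k : 'I_n.+1 => (k < n)%N)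
                         (fun k : 'I_n.+1 => k == n :> nat)
    = \sum_(i | i != ord_max) nu i * careless_P R n q i ord_max.
Proof.
rewrite /two_step_prob; apply: eq_big => [i | i _]; first exact: ltn_ord_max.
by rewrite (big_pred1 ord_max).
Qed.

End CarelessKernel.

Theorem mainTheorem15 (R : realFieldType) (n : nat) (p : R)
  (hn : (0 < n)%N) (hp0 : 0 < p) (hp1 : p < 1) (nu : 'I_n.+1 -> R) :
  let q := 1 - p in
  stationary_law R n q nu ->
  let mu := two_step_prob R n q nu (fun k : 'I_n.+1 => (k < n)%N)
                                 (fun k : 'I_n.+1 => k == n :> nat) in
  mu = nu ord_max * (1 - q ^+ n) /\
  mu = nu (inord n.-1) * (q ^+ n / n%:R).
Proof.
move=> q stat_nu mu; rewrite /mu two_step_prob_into_max.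
split; first by rewrite stationary_inflow // careless_P_max_max.
exact: inflow_max.
Qed.
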